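(* Let $d\ge1$, $\alpha>0$, $n\in\mathbb N$. There exists a constant $c<\infty$ depending only on $n,\alpha,d$ such that for every $\ell\in\mathbb N$, $$\sum{}^{*}\ e^{-|u_1-v_1|^\alpha-|u_2-v_2|^\alpha-\cdots-|u_{2n}-v_{2n}|^\alpha}\le c\,\ell^{nd},$$ where $\sum^*$ runs over all $(u_1,\dots,u_{2n},v_1,\dots,v_{2n})\in([-\ell,\ell]^d\cap\mathbb Z^d)^{4n}$ such that for each $i\in\{1,\dots,2n\}$ there exists $j\in\{1,\dots,2n\}$, $j\ne i$, with $\{u_i,v_i\}\cap\{u_j,v_j\}\ne\emptyset$.
   Context: $|\cdot|$ denotes the Euclidean norm. *)

From HB Require Import structures.
From mathcomp Require Import all_boot all_order all_algebra.
From mathcomp Require Import all_classical all_reals all_analysis.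
Set Implicit Arguments. Unset Strict Implicit. Unset Printing Implicit Defensive.
Import Order.TTheory GRing.Theory Num.Theory.
Local Open Scope ring_scope.

(* A lattice point of [-l,l]^d ∩ Z^d is encoded by its shifted coordinates
   k ↦ x_k + l ∈ {0,…,2l}.  The encoding is a bijection onto the box. *)
Notation boxpt d l := {ffun 'I_d -> 'I_(2 * l).+1}.

Definition coord (d l : nat) (p : boxpt d l) (k : 'I_d) : int :=
  (nat_of_ord (p k))%:Z - l%:Z.

Definition edist (R : realType) (d l : nat) (p q : boxpt d l) : R :=
  Num.sqrt (\sum_(k < d) ((coord p k - coord q k)%:~R) ^+ 2).

Definition star_cond (m d l : nat) (u v : {ffun 'I_m -> boxpt d l}) : bool :=
  [forall i : 'I_m, exists j : 'I_m,
     (j != i) && [|| u i == u j, u i == v j, v i == u j | v i == v j]].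

Definition star_sum (R : realType) (alpha : R) (n d l : nat) : R :=
  \sum_(uv : {ffun 'I_(2 * n) -> boxpt d l} * {ffun 'I_(2 * n) -> boxpt d l}
          | star_cond uv.1 uv.2)
     expR (- \sum_(i < 2 * n) (edist R (uv.1 i) (uv.2 i)) `^ alpha).

From Pilot Require Import Defs.
From HB Require Import structures.
From mathcomp Require Import all_boot all_order all_algebra.
From mathcomp Require Import all_classical all_reals all_analysis.
From mathcomp Require Import ring lra zify.
Set Implicit Arguments.
Unset Strict Implicit.
Unset Printing Implicit Defensive.

Import Order.TTheory GRing.Theory Num.Theory.
Local Open Scope ring_scope.

(* Let w(p, q) = exp(-|p - q|^alpha).  Its row sums over the box are bounded
   independently of l: comparing the Euclidean norm with each coordinate gives
   w(p, q) <= prod_k exp(-|p_k - q_k|^alpha / d), and exp(-|z|^alpha / d) is at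
   most a constant times the increment softsign z - softsign (z - 1) of the
   bounded function softsign x = x / (|x| + 1), so each coordinate sum telescopes.

   In a configuration of the starred sum, the graph on {1, ..., 2n} joining i and
   j whenever the pairs {u_i, v_i} and {u_j, v_j} meet has no isolated vertex, so
   it has a dominating set F with at most n elements: a minimal dominating set and
   its complement both dominate.  Once F and an anchor s(i) in F adjacent to each
   i outside F are fixed, the pairs indexed by F are free, each contributing at
   most (2l + 1)^d S, while every other pair must meet its already fixed anchor
   pair, contributing at most 4 S.  Summing over the finitely many choices of
   (F, s) gives the bound c l^(nd). *)

Section Decay.
Variable R : realType.

Definition softsign (x : R) : R := x / (`|x| + 1).

Lemma softsign_norm_le1 x : `|softsign x| <= 1.
Proof.
rewrite /softsign normrM normfV [`|_ + 1|]ger0_norm ?addr_ge0 //.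
by rewrite ler_pdivrMr ?mul1r ?ltr_wpDl // lerDl.
Qed.

Lemma softsign_increment x : x <= 0 \/ 1 <= x ->
  ((`|x| + 2) ^+ 2)^-1 <= softsign x - softsign (x - 1).
Proof.
rewrite /softsign => -[x_le0 | x_ge1].
- have x1_le0 : x - 1 <= 0 by lra.
  rewrite !ler0_norm //.
  have -> : x / (- x + 1) - (x - 1) / (- (x - 1) + 1) = ((1 - x) * (2 - x))^-1.
    by field; apply/andP; split; apply/negP => /eqP; lra.
  rewrite lef_pV2 ?posrE; nra.
- have [x_ge0 x1_ge0] : 0 <= x /\ 0 <= x - 1 by split; lra.
  rewrite !ger0_norm //.
  have -> : x / (x + 1) - (x - 1) / (x - 1 + 1) = (x * (x + 1))^-1.
    by field; apply/andP; split; apply/negP => /eqP; lra.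
  rewrite lef_pV2 ?posrE; nra.
Qed.

Lemma expR_powR_decay (alpha b : R) : 0 < alpha -> 1 <= b ->
  exists C, forall m, 0 <= m -> expR (- m `^ alpha / b) <= C / (m + 2) ^+ 2.
Proof.
move=> alpha_gt0 b_ge1.
pose k := Num.truncn (2 / alpha).
have k_large : 2 <= alpha * k.+1%:R.
  by rewrite mulrC -ler_pdivrMr // ltW // truncnS_gt.
have b_gt0 : 0 < b by lra.
exists (9 * (b ^+ k.+1 * k.+1`!%:R)) => m m_ge0.
have bk_ge1 : 1 <= b ^+ k.+1 * k.+1`!%:R.
  by rewrite mulr_ege1 ?exprn_ege1 // ler1n fact_gt0.
have m2_gt0 : 0 < (m + 2) ^+ 2 by rewrite exprn_gt0 //; lra.
rewrite ler_pdivlMr // mulrC -ler_pdivlMr ?expR_gt0 // -expRN mulNr opprK.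
set y := m `^ alpha / b.
have y_ge0 : 0 <= y by rewrite divr_ge0 ?powR_ge0 // ltW.
have [m_le1 | m_gt1] := lerP m 1.
  by have := expR_ge1Dx y; nra.
(* For m >= 1: (m + 2)^2 <= 9 m^2 <= 9 m^(alpha (k + 1)) = 9 (b y)^(k + 1)
   <= 9 b^(k + 1) (k + 1)! e^y. *)
have m2_le : m ^+ 2 <= b ^+ k.+1 * y ^+ k.+1.
  rewrite -exprMn /y mulrC divfK ?gt_eqF //.
  rewrite -[_ ^+ k.+1]powR_mulrn ?powR_ge0 // -powRrM -[m ^+ 2]powR_mulrn; last lra.
  by apply: ler_powR => //; lra.
have yk_le : y ^+ k.+1 <= k.+1`!%:R * expR y.
  rewrite mulrC -ler_pdivrMr ?ltr0n ?fact_gt0 //.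
  by apply: le_trans (expR_ge1Dxn k y_ge0); rewrite lerDr.
apply: (@le_trans _ _ (9 * m ^+ 2)); first nra.
rewrite -mulrA ler_wpM2l // (le_trans m2_le) // -mulrA ler_wpM2l ?exprn_ge0 //; lra.
Qed.

Lemma softsign_int_increment (z : int) :
  ((`|z%:~R| + 2) ^+ 2)^-1 <= softsign z%:~R - softsign (z%:~R - 1).
Proof.
apply: softsign_increment; have [z_le0 | z_gt0] := lerP z 0.
  by left; rewrite lerz0.
by right; rewrite ler1z -gtz0_ge1.
Qed.

Lemma sum_expR_powR_int_bounded (alpha b : R) : 0 < alpha -> 1 <= b ->
  exists C, forall (a : int) (N : nat),
    \sum_(t < N) expR (- `|(a - t%:Z)%:~R : R| `^ alpha / b) <= C.
Proof.
move=> alpha_gt0 b_ge1; have [C decay] := expR_powR_decay alpha_gt0 b_ge1.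
have C_ge0 : 0 <= C.
  have := decay 0 (lexx _); rewrite add0r ler_pdivlMr ?exprn_gt0 //.
  by apply: le_trans; rewrite mulr_ge0 ?expR_ge0.
exists (2 * C) => a N.
pose g t : R := softsign (a - t%:Z)%:~R.
have telescope : \sum_(t < N) (g t - g t.+1) = g 0%N - g N.
  rewrite -(big_mkord xpredT (fun t => g t - g t.+1)).
  by rewrite (telescope_sumr_eq (fun t => - g t)) // => [|t _]; rewrite opprK addrC.
apply: (@le_trans _ _ (\sum_(t < N) C * (g t - g t.+1))).
  apply: ler_sum => t _.
  apply: (le_trans (decay _ (normr_ge0 _))); rewrite ler_wpM2l //.
  have -> : g t.+1 = softsign ((a - t%:Z)%:~R - 1).
    by rewrite /g -addn1 PoszD opprD addrA !intrB.
  by rewrite /g; apply: softsign_int_increment.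
rewrite -mulr_sumr telescope mulrC ler_wpM2r //.
have := softsign_norm_le1 ((a - 0%:Z)%:~R); have := softsign_norm_le1 ((a - N%:Z)%:~R).
rewrite /g !ler_norml => /andP[? ?] /andP[? ?]; lra.
Qed.
End Decay.

Section Kernel.
Variables (R : realType) (alpha : R) (d : nat).
Hypotheses (alpha_gt0 : 0 < alpha) (d_gt0 : (0 < d)%N).

Lemma sum_powR_le_sqrt_sumsq (x : 'I_d -> R) :
  \sum_k `|x k| `^ alpha <= d%:R * Num.sqrt (\sum_k x k ^+ 2) `^ alpha.
Proof.
set E := Num.sqrt _.
apply: (@le_trans _ _ (\sum_(k < d) E `^ alpha)).
  apply: ler_sum => k _.
  apply: (ge0_ler_powR (ltW alpha_gt0)); rewrite ?nnegrE ?sqrtr_ge0 //.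
  rewrite -sqrtr_sqr ler_wsqrtr // (bigD1 k) //= lerDl.
  by apply: sumr_ge0 => i _; rewrite sqr_ge0.
by rewrite sumr_const card_ord mulr_natl.
Qed.

Definition kern (l : nat) (p q : boxpt d l) : R := expR (- Defs.edist R p q `^ alpha).

Lemma edist_sym (l : nat) (p q : boxpt d l) : Defs.edist R p q = Defs.edist R q p.
Proof.
rewrite /Defs.edist; congr Num.sqrt; apply: eq_bigr => k _.
by rewrite -sqrrN -mulrNz opprB.
Qed.

Lemma kern_sym (l : nat) (p q : boxpt d l) : kern p q = kern q p.
Proof. by rewrite /kern edist_sym. Qed.

Lemma kern_le_prod (l : nat) (p q : boxpt d l) :
  kern p q <=
    \prod_k expR (- `|((p k : nat)%:Z - (q k : nat)%:Z)%:~R : R| `^ alpha / d%:R).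
Proof.
have edistE : Defs.edist R p q =
    Num.sqrt (\sum_k (((p k : nat)%:Z - (q k : nat)%:Z)%:~R : R) ^+ 2).
  rewrite /Defs.edist; congr Num.sqrt; apply: eq_bigr => k _.
  by rewrite /coord opprB addrA subrK.
rewrite /kern -expR_sum ler_expR -mulr_suml sumrN mulNr lerN2.
by rewrite ler_pdivrMr ?ltr0n // mulrC edistE sum_powR_le_sqrt_sumsq.
Qed.

Lemma kern_row_sum_bounded :
  exists S, forall (l : nat) (p : boxpt d l), \sum_q kern p q <= S.
Proof.
have d_ge1 : 1 <= d%:R :> R by rewrite ler1n.
have [C sum_le] := sum_expR_powR_int_bounded alpha_gt0 d_ge1.
exists (C ^+ d) => l p.
apply: le_trans; first by apply: ler_sum => q _; apply: kern_le_prod.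
rewrite -(bigA_distr_bigA (fun k (t : 'I_(2 * l).+1) =>
  expR (- `|((p k : nat)%:Z - (t : nat)%:Z)%:~R : R| `^ alpha / d%:R))) /=.
rewrite -[d in C ^+ d]card_ord -prodr_const; apply: ler_prod => k _.
by rewrite sumr_ge0 => [|t _]; rewrite ?expR_ge0 ?sum_le.
Qed.
End Kernel.

Section FinSums.
Variable R : realDomainType.

Lemma sum_mul_eq (P : finType) (G : P -> R) (c : P) :
  \sum_p G p * (p == c)%:R = G c.
Proof.
rewrite (bigD1 c) //= eqxx mulr1 big1 ?addr0 // => p /negbTE ->.
by rewrite mulr0.
Qed.

Lemma ler_sum_inj (A B : finType) (h : A -> B) (G : B -> R) :
  injective h -> (forall b, 0 <= G b) -> \sum_a G (h a) <= \sum_b G b.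
Proof.
move=> h_inj G_ge0.
rewrite -(big_imset _ (in2W h_inj)) /= [X in _ <= X](bigID (mem (h @: A))) /=.
by rewrite lerDl sumr_ge0.
Qed.

Lemma sum_pair_prod (I P : finType) (f : I -> P -> P -> R) :
  \sum_(uv : {ffun I -> P} * {ffun I -> P}) \prod_i f i (uv.1 i) (uv.2 i)
  = \prod_i \sum_p \sum_q f i p q.
Proof.
rewrite -(pair_bigA _ (fun u v : {ffun I -> P} => \prod_i f i (u i) (v i))) /=.
rewrite (bigA_distr_bigA (fun i p => \sum_q f i p q)) /=.
by apply: eq_bigr => u _; rewrite (bigA_distr_bigA (fun i q => f i (u i) q)).
Qed.

Lemma sum_pair_prod_le (I P : finType) (f : I -> P -> P -> R) (c : I -> R) :
  (forall i p q, 0 <= f i p q) -> (forall i, \sum_p \sum_q f i p q <= c i) ->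
  \sum_(uv : {ffun I -> P} * {ffun I -> P}) \prod_i f i (uv.1 i) (uv.2 i)
  <= \prod_i c i.
Proof.
move=> f_ge0 f_le; rewrite sum_pair_prod; apply: ler_prod => i _.
by rewrite f_le andbT; do 2![apply: sumr_ge0 => ? _].
Qed.

Lemma sum_le_cover (A B : finType) (f : A -> R) (PA : pred A) (PB : pred B)
    (C : A -> B -> bool) :
  (forall a, 0 <= f a) -> (forall a, PA a -> exists2 b, PB b & C a b) ->
  \sum_(a | PA a) f a <= \sum_(b | PB b) \sum_a f a * (C a b)%:R.
Proof.
move=> f_ge0 cover; rewrite exchange_big /= big_mkcond /=.
apply: ler_sum => a _; rewrite -mulr_sumr.
case: ifP => [/cover[b PBb Cab] | _]; last first.
  by rewrite mulr_ge0 // sumr_ge0.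
rewrite -[X in X <= _]mulr1 ler_wpM2l // (bigD1 b) //= Cab lerDl.
by rewrite sumr_ge0.
Qed.
End FinSums.

Lemma dominating_set_half (I : finType) (r : rel I) :
  symmetric r -> irreflexive r -> (forall i, exists j, r i j) ->
  exists F : {set I}, (#|F| * 2 <= #|I|)%N /\
    (forall i, i \notin F -> exists2 j, j \in F & r i j).
Proof.
move=> r_sym r_irr r_total.
pose dom (D : {set I}) := [forall i, (i \notin D) ==> [exists j in D, r i j]].
have domP D : dom D -> forall i, i \notin D -> exists2 j, j \in D & r i j.
  move=> /forallP domD i iD; move: (domD i); rewrite iD /=.
  by case/existsP => j /andP[jD rij]; exists j.
have domT : dom [set: I] by apply/forallP => i; rewrite inE.
have [D domD minD] := arg_minnP (fun D : {set I} => #|D|) domT.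
(* A minimal dominating set also dominates its complement. *)
have domCD : dom (~: D).
  apply/forallP => v; rewrite finset.in_setC negbK; apply/implyP => vD.
  case: (boolP [exists j in ~: D, r v j]) => // no_out_nbr.
  have nbrD j : r v j -> j \in D.
    move=> rvj; apply: contraR no_out_nbr => jD.
    by apply/existsP; exists j; rewrite finset.in_setC jD.
  have : dom (D :\ v).
    apply/forallP => i; apply/implyP; rewrite finset.in_setD1 negb_and negbK.
    case/orP => [/eqP -> | iD].
      have [j rvj] := r_total v; apply/existsP; exists j.
      rewrite finset.in_setD1 nbrD // rvj !andbT.
      by apply: contraTneq rvj => ->; rewrite r_irr.
    have [j jD rij] := domP D domD i iD; apply/existsP; exists j.
    rewrite finset.in_setD1 jD rij !andbT; apply: contraNneq iD => jv.
    by apply: nbrD; rewrite r_sym -jv.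
  by move/minD; rewrite (cardsD1 v D) vD; lia.
have := cardsC D; case: (leqP (#|D| * 2) #|I|) => D_small cardDC.
  by exists D; split => //; apply: domP.
by exists (~: D); split; [lia | apply: domP].
Qed.

Section Anchors.
Variables (I P : finType).

Definition meets (a b c e : P) : bool := [|| a == c, a == e, b == c | b == e].

Definition anchored (F : {set I}) (s : I -> I) (u v : {ffun I -> P}) : bool :=
  [forall i, (i \notin F) ==> (s i \in F) && meets (u i) (v i) (u (s i)) (v (s i))].

Lemma anchored_exists (u v : {ffun I -> P}) :
  (forall i, exists2 j, j != i & meets (u i) (v i) (u j) (v j)) ->
  exists2 Fs : {set I} * {ffun I -> I},
    (#|Fs.1| * 2 <= #|I|)%N & anchored Fs.1 Fs.2 u v.
Proof.
move=> linked.
pose r i j := (j != i) && meets (u i) (v i) (u j) (v j).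
have r_sym : symmetric r.
  move=> i j; rewrite /r /meets eq_sym; congr (_ && _).
  by rewrite ![_ == u i]eq_sym ![_ == v i]eq_sym; do 4!case: (_ == _).
have r_irr : irreflexive r by move=> i; rewrite /r eqxx.
have r_total i : exists j, r i j by have [j ji mij] := linked i; exists j; apply/andP.
have [F [F_small domF]] := dominating_set_half r_sym r_irr r_total.
exists (F, [ffun i => odflt i [pick j in F | r i j]]) => //=.
apply/forallP => i; apply/implyP => iF; rewrite ffunE.
case: pickP => [j /andP[jF /andP[_ mij]] | no_nbr] /=; first by rewrite jF.
by have [j jF rij] := domF i iF; move: (no_nbr j); rewrite jF rij.
Qed.

Variables (R : realFieldType) (w : P -> P -> R) (S : R).
Hypotheses (w_ge0 : forall p q, 0 <= w p q)
  (w_row : forall p, \sum_q w p q <= S) (w_col : forall q, \sum_p w p q <= S).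

Lemma sum_meets_le (c e : P) : \sum_p \sum_q w p q * (meets p q c e)%:R <= 4 * S.
Proof.
have meets_le p q : (meets p q c e)%:R
    <= (p == c)%:R + (p == e)%:R + (q == c)%:R + (q == e)%:R :> R.
  by rewrite /meets; do 4!case: (_ == _); rewrite /=; lra.
apply: (@le_trans _ _ (\sum_p \sum_q (w p q * (p == c)%:R + w p q * (p == e)%:R
   + w p q * (q == c)%:R + w p q * (q == e)%:R))).
  by do 2![apply: ler_sum => ? _]; rewrite -!mulrDr ler_wpM2l.
under eq_bigr do rewrite !big_split /= !sum_mul_eq -!mulr_suml.
rewrite !big_split /= !sum_mul_eq.
by have := w_row c; have := w_row e; have := w_col c; have := w_col e; lra.
Qed.

Variable p0 : P.

Local Notation cfg := ({ffun I -> P} * {ffun I -> P})%type.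

Definition restrict (A : {set I}) (u : {ffun I -> P}) : {ffun I -> P} :=
  [ffun i => if i \in A then u i else p0].

Lemma restrict_inj (A : {set I}) (u u' : {ffun I -> P}) :
  restrict A u = restrict A u' -> restrict (~: A) u = restrict (~: A) u' -> u = u'.
Proof.
move=> /ffunP eqA /ffunP eqCA; apply/ffunP => i.
move: (eqA i) (eqCA i); rewrite !ffunE finset.in_setC.
by case: (i \in A) => /= [-> | _ ->].
Qed.

Definition filler (p q : P) : R := ((p == p0) && (q == p0))%:R.

Lemma sum_filler : \sum_p \sum_q filler p q = 1.
Proof.
rewrite (bigD1 p0) //= (bigD1 p0) //= {1}/filler !eqxx.
rewrite [X in _ + X + _]big1 => [|q /negbTE q_p0]; last by rewrite /filler q_p0 andbF.
rewrite big1 ?addr0 // => p /negbTE p_p0.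
by rewrite big1 // => q _; rewrite /filler p_p0.
Qed.

(* The weight of a configuration split into its coordinates [x] in [F] and
   [y] outside [F]; coordinates that were masked out by [restrict] must be
   filler, and each pair outside [F] must meet its anchor pair in [x]. *)
Definition split_weight (F : {set I}) (s : I -> I) (x y : cfg) : R :=
  (\prod_i (if i \in F then w (x.1 i) (x.2 i) else filler (x.1 i) (x.2 i))) *
  \prod_i (if i \in F then filler (y.1 i) (y.2 i)
           else w (y.1 i) (y.2 i) * (meets (y.1 i) (y.2 i) (x.1 (s i)) (x.2 (s i)))%:R).

Lemma split_weight_ge0 F s x y : 0 <= split_weight F s x y.
Proof.
by rewrite mulr_ge0 // prodr_ge0 // => i _; case: ifP; rewrite ?mulr_ge0.
Qed.

Lemma anchored_weight_le (F : {set I}) (s : I -> I) (uv : cfg) :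
  (\prod_i w (uv.1 i) (uv.2 i)) * (anchored F s uv.1 uv.2)%:R
  <= split_weight F s (restrict F uv.1, restrict F uv.2)
                      (restrict (~: F) uv.1, restrict (~: F) uv.2).
Proof.
have [/forallP anch|_] := boolP (anchored F s uv.1 uv.2); last first.
  by rewrite mulr0 split_weight_ge0.
rewrite mulr1 /split_weight -big_split /= le_eqVlt; apply/orP; left.
apply/eqP/eq_bigr => i _; rewrite /filler !ffunE finset.in_setC.
have [iF | iNF] /= := boolP (i \in F); first by rewrite !eqxx mulr1.
have /andP[siF mi] := implyP (anch i) iNF.
by rewrite siF mi !eqxx mulr1 mul1r.
Qed.

Lemma sum_split_weight_le (F : {set I}) (s : I -> I) :
  \sum_x \sum_y split_weight F s x y
  <= \prod_i (if i \in F then #|P|%:R * S else 4 * S).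
Proof.
have S_ge0 : 0 <= S by apply: le_trans (w_row p0); rewrite sumr_ge0.
apply: (@le_trans _ _ (\sum_(x : cfg)
    (\prod_i (if i \in F then w (x.1 i) (x.2 i) else filler (x.1 i) (x.2 i))) *
    \prod_i (if i \in F then 1 else 4 * S))).
  apply: ler_sum => x _; rewrite /split_weight -mulr_sumr ler_wpM2l ?prodr_ge0 //.
    by move=> i _; case: ifP.
  apply: (sum_pair_prod_le (f := fun i p q => if i \in F then filler p q
    else w p q * (meets p q (x.1 (s i)) (x.2 (s i)))%:R)) => [i p q | i];
    case: ifP => _; rewrite ?mulr_ge0 //; first by rewrite sum_filler.
  exact: sum_meets_le.
rewrite -mulr_suml.
apply: (@le_trans _ _ ((\prod_i (if i \in F then #|P|%:R * S else 1)) *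
                       \prod_i (if i \in F then 1 else 4 * S))).
  apply: ler_wpM2r; first by rewrite prodr_ge0 // => i _; case: ifP => // _; lra.
  apply: (sum_pair_prod_le (f := fun i p q => if i \in F then w p q else filler p q))
    => [i p q | i]; case: ifP => _ //; last by rewrite sum_filler.
  rewrite -sum1_card natr_sum mulr_suml; apply: ler_sum => p _.
  by rewrite mul1r w_row.
rewrite -big_split le_eqVlt; apply/orP; left; apply/eqP/eq_bigr => i _ /=.
by case: ifP; rewrite ?mulr1 ?mul1r.
Qed.

Lemma sum_anchored_le (F : {set I}) (s : I -> I) :
  \sum_(uv : cfg) (\prod_i w (uv.1 i) (uv.2 i)) * (anchored F s uv.1 uv.2)%:R
  <= \prod_i (if i \in F then #|P|%:R * S else 4 * S).
Proof.
pose split (uv : cfg) :=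
  ((restrict F uv.1, restrict F uv.2), (restrict (~: F) uv.1, restrict (~: F) uv.2)).
have split_inj : injective split.
  move=> [u v] [u' v'] [eqFu eqFv eqCu eqCv].
  by rewrite (restrict_inj eqFu eqCu) (restrict_inj eqFv eqCv).
apply: le_trans; first by apply: ler_sum => uv _; apply: anchored_weight_le.
apply: le_trans (sum_split_weight_le F s).
rewrite (pair_bigA _ (split_weight F s)).
apply: (ler_sum_inj (G := fun b => split_weight F s b.1 b.2) split_inj) => b.
exact: split_weight_ge0.
Qed.
End Anchors.

Lemma prod_if_le (R : realDomainType) (I : finType) (F : {set I}) (N M : R)
    (k : nat) :
  1 <= N -> 0 <= M -> (#|F| <= k)%N ->
  \prod_i (if i \in F then N * M else M) <= N ^+ k * M ^+ #|I|.
Proof.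
move=> N_ge1 M_ge0 F_le.
have -> : \prod_i (if i \in F then N * M else M) = N ^+ #|F| * M ^+ #|I|.
  rewrite (eq_bigr (fun i => (if i \in F then N else 1) * M)) => [|i _]; last first.
    by case: ifP; rewrite ?mul1r.
  by rewrite big_split /= -big_mkcond /= !prodr_const.
by rewrite ler_wpM2r ?exprn_ge0 // ler_weXn2l.
Qed.

Lemma card_boxpt (d l : nat) : #|boxpt d l| = ((2 * l).+1 ^ d)%N.
Proof. by rewrite card_ffun !card_ord. Qed.

Lemma star_sum_le (R : realType) (alpha : R) (n d l : nat) (S : R) :
  (forall p : boxpt d l, \sum_q kern alpha p q <= S) ->
  star_sum alpha n d l <=
    #|{: {set 'I_(2 * n)} * {ffun 'I_(2 * n) -> 'I_(2 * n)}}|%:R *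
    (#|boxpt d l|%:R ^+ n * (4 * S) ^+ (2 * n)).
Proof.
move=> row_le.
have col_le (q : boxpt d l) : \sum_p kern alpha p q <= S.
  by under eq_bigr do rewrite kern_sym; apply: row_le.
have kern_ge0 (p q : boxpt d l) : 0 <= kern alpha p q by apply: expR_ge0.
have S_ge0 : 0 <= S by apply: le_trans (row_le [ffun => ord0]); rewrite sumr_ge0.
have -> : star_sum alpha n d l =
    \sum_(uv : {ffun 'I_(2 * n) -> boxpt d l} * {ffun 'I_(2 * n) -> boxpt d l}
          | star_cond uv.1 uv.2) \prod_i kern alpha (uv.1 i) (uv.2 i).
  by apply: eq_bigr => uv _; rewrite -sumrN expR_sum.
apply: le_trans.
  apply: (sum_le_cover
    (PB := fun Fs : {set 'I_(2 * n)} * {ffun 'I_(2 * n) -> 'I_(2 * n)} => (#|Fs.1| <= n)%N)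
    (C := fun uv Fs => anchored Fs.1 Fs.2 uv.1 uv.2)) => [uv | [u v] /forallP star].
    by rewrite prodr_ge0.
  have [Fs F_small anch] : exists2 Fs : {set 'I_(2 * n)} * {ffun 'I_(2 * n) -> 'I_(2 * n)},
      (#|Fs.1| * 2 <= #|'I_(2 * n)|)%N & anchored Fs.1 Fs.2 u v.
    apply: anchored_exists => i.
    by have /existsP[j /andP[ji mij]] := star i; exists j.
  by exists Fs => //; move: F_small; rewrite card_ord; lia.
apply: le_trans.
  apply: ler_sum => Fs F_small.
  apply: le_trans (sum_anchored_le kern_ge0 row_le col_le [ffun => ord0] Fs.1 Fs.2) _.
  have P_ge1 : 1 <= #|boxpt d l|%:R :> R by rewrite card_boxpt ler1n expn_gt0.
  have four_S_ge0 : 0 <= 4 * S by rewrite mulr_ge0.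
  have := prod_if_le P_ge1 four_S_ge0 F_small; rewrite card_ord => prod_le.
  apply: le_trans prod_le.
  apply: ler_prod => i _; case: ifP => _; rewrite ?mulr_ge0 ?ler_wpM2l //=; lra.
rewrite sumr_const [X in _ <= X]mulr_natl; apply: ler_wpMn2l; last exact: max_card.
by rewrite mulr_ge0 ?exprn_ge0 ?mulr_ge0.
Qed.

Theorem lemmaA2 (R : realType) (d : nat) (alpha : R) (n : nat) :
  (1 <= d)%N -> 0 < alpha ->
  exists c : R, forall l : nat, (1 <= l)%N ->
    star_sum alpha n d l <= c * (l%:R) ^+ (n * d).
Proof.
move=> d_ge1 alpha_gt0.
have [S row_le] := kern_row_sum_bounded alpha_gt0 d_ge1.
have S_ge0 : 0 <= S.
  apply: le_trans (row_le 0%N [ffun => ord0]).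
  by rewrite sumr_ge0 // => q _; apply: expR_ge0.
exists (#|{: {set 'I_(2 * n)} * {ffun 'I_(2 * n) -> 'I_(2 * n)}}|%:R *
        ((4 * S) ^+ (2 * n) * 3 ^+ (n * d))) => l l_ge1.
apply: le_trans (star_sum_le n (row_le l)) _.
rewrite -mulrA ler_wpM2l // mulrC -mulrA ler_wpM2l ?exprn_ge0 ?mulr_ge0 //.
rewrite card_boxpt natrX -exprM (mulnC d n) -exprMn.
apply: lerXn2r; rewrite ?nnegrE ?mulr_ge0 //.
have : 1 <= l%:R :> R by rewrite ler1n.
rewrite -addn1 natrD natrM; lra.
Qed.
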